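(* Let $A$ be admissible, let $\ell>0$ with $A(x)=A_\infty$ for all $x\ge\ell$, and let $M:=\max_{x\in\mathbb{R}}|A'(x)/A(x)|$; assume $M>0$. Set $\lambda:=\frac M2e^{-M\ell}\sqrt{1-2M\ell e^{-2M\ell}}$, $\kappa:=\sqrt{\lambda^2+(M/2)^2}$ and $$g_1(x):=\frac{e^{Mx/2}}{\kappa}\big(\kappa\cosh(\kappa x)+(\lambda-M/2)\sinh(\kappa x)\big),\qquad g_2(x):=\frac{e^{Mx/2}}{\kappa}\big(\kappa\cosh(\kappa x)-(\lambda+M/2)\sinh(\kappa x)\big).$$ Then $g_1,g_2>0$ on $[0,\ell]$, $g_1(0)=g_2(0)=1$, and on $[0,\ell]$ $$g_1'-\tfrac M2|g_1-g_2|\ge\lambda g_1,\qquad -g_2'-\tfrac M2|g_1-g_2|\ge\lambda g_2.$$ Consequently, for every $\phi\in C_c^\infty(\mathbb{R})$ with $\operatorname{supp}\phi\subset(0,\infty)$ and $\tau_0:=\max\operatorname{supp}\phi$, the energy satisfies $\mathscr{E}_{\phi,g_1,g_2}(\tau)\le\mathscr{E}_{\phi,g_1,g_2}(\tau_0)e^{-\lambda(\tau-\tau_0)}$ for all $\tau>\tau_0$.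
   Context: A function $A:\mathbb{R}\to\mathbb{R}$ is admissible if $A\in C^\infty(\mathbb{R})$, $A>0$, and there are $x_+>x_->0$ and $A_\infty>0$ with $A(x)=1$ for $x<x_-$ and $A(x)=A_\infty$ for $x>x_+$. $\square_Au:=\partial_t^2u-\frac{1}{A(x)}\partial_x(A(x)\partial_xu)$. For $\phi\in C_c^\infty(\mathbb{R})$ supported in $(0,\infty)$, let $u\in C^\infty([0,\infty)\times\mathbb{R})$ solve $\square_Au=0$ for $x>0$, $t\in\mathbb{R}$; $\partial_xu(0,t)=\phi(t)$; $u(x,t)=0$ for $x>0$, $t<0$. For positive functions $g_1,g_2$ on $[0,\ell]$ the energy is $$\mathscr{E}_{\phi,g_1,g_2}(\tau):=\frac12\int_0^\ell\Big[g_1(x)\big(\partial_tu(x,\tau)+\partial_xu(x,\tau)\big)^2+g_2(x)\big(\partial_tu(x,\tau)-\partial_xu(x,\tau)\big)^2\Big]A(x)\,dx.$$ *)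

From Stdlib Require Import Reals Lra List.
From Coquelicot Require Import Coquelicot.
Open Scope R_scope.

Definition smooth1 (f : R -> R) : Prop :=
  forall (n : nat) (x : R), ex_derive (Derive_n f n) x.

Definition Dx (u : R -> R -> R) : R -> R -> R :=
  fun x t => Derive (fun y => u y t) x.
Definition Dt (u : R -> R -> R) : R -> R -> R :=
  fun x t => Derive (fun s => u x s) t.

Definition pd (b : bool) (u : R -> R -> R) : R -> R -> R :=
  if b then Dx u else Dt u.
Definition iter_pd (l : list bool) (u : R -> R -> R) : R -> R -> R :=
  fold_right pd u l.

Definition smooth2 (u : R -> R -> R) : Prop :=
  forall (l : list bool) (x t : R),
    ex_derive (fun y => iter_pd l u y t) x /\
    ex_derive (fun s => iter_pd l u x s) t /\
    continuous (fun p : R * R => iter_pd l u (fst p) (snd p)) (x, t).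

Definition admissible (A : R -> R) (Ainf : R) : Prop :=
  smooth1 A /\ (forall x, 0 < A x) /\ 0 < Ainf /\
  exists xm xp : R, 0 < xm /\ xm < xp /\
    (forall x, x < xm -> A x = 1) /\ (forall x, xp < x -> A x = Ainf).

Definition in_supp (phi : R -> R) (t : R) : Prop :=
  forall eps : R, 0 < eps -> exists s, Rabs (s - t) < eps /\ phi s <> 0.

Definition test_fun_pos (phi : R -> R) : Prop :=
  smooth1 phi /\
  (exists Rb : R, forall t, in_supp phi t -> Rabs t <= Rb) /\
  (forall t, in_supp phi t -> 0 < t).

Definition box_A (A : R -> R) (u : R -> R -> R) (x t : R) : R :=
  Dt (Dt u) x t - / A x * Derive (fun y => A y * Dx u y t) x.

(* u solves the boundary problem with data phi.  u is taken smooth on all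
   of R^2 (equivalently, by Seeley extension, smooth on [0,oo) x R). *)
Definition solves (A : R -> R) (phi : R -> R) (u : R -> R -> R) : Prop :=
  smooth2 u /\
  (forall x t, 0 < x -> box_A A u x t = 0) /\
  (forall t, Dx u 0 t = phi t) /\
  (forall x t, 0 < x -> t < 0 -> u x t = 0).

Definition energy (A : R -> R) (u : R -> R -> R) (g1 g2 : R -> R) (l tau : R) : R :=
  / 2 * RInt (fun x =>
     (g1 x * (Dt u x tau + Dx u x tau) ^ 2
      + g2 x * (Dt u x tau - Dx u x tau) ^ 2) * A x) 0 l.

Definition lam (M l : R) : R :=
  M / 2 * exp (- (M * l)) * sqrt (1 - 2 * M * l * exp (- (2 * M * l))).
Definition kap (M l : R) : R := sqrt (lam M l ^ 2 + (M / 2) ^ 2).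

Definition g1f (M l : R) (x : R) : R :=
  exp (M * x / 2) / kap M l *
  (kap M l * cosh (kap M l * x) + (lam M l - M / 2) * sinh (kap M l * x)).
Definition g2f (M l : R) (x : R) : R :=
  exp (M * x / 2) / kap M l *
  (kap M l * cosh (kap M l * x) - (lam M l + M / 2) * sinh (kap M l * x)).

(* The multipliers solve the linear system
     g1' = lam g1 + (M/2) (g1 - g2),   g2' = - lam g2 - (M/2) (g1 - g2),   g1(0) = g2(0) = 1,
   and g1 - g2 is a positive multiple of sinh, so the stated differential inequalities hold with
   equality.  The factor e^{-Ml} sqrt(1 - 2 M l e^{-2Ml}) in lam makes lam e^{2 kap l} < M, which
   keeps g2 positive on [0, l].

   For the energy, write w+ = Dt u + Dx u and w- = Dt u - Dx u.  The density
   e = A (g1 w+^2 + g2 w-^2) / 2 and the flux F = A (g1 w+^2 - g2 w-^2) / 2 satisfy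
   Dt e <= Dx F - lam e on (0, l), because |A'/A| <= M and g1 >= g2.  After the support of phi the
   flux vanishes at x = 0 (the Neumann datum is zero and g1(0) = g2(0)), and F <= 0 at x = l since
   w+ vanishes there: beyond l the medium is homogeneous, so w+ is constant along the characteristics
   x + t = const, which start in the quiet region t < 0.  Hence E' <= - lam E, and Gronwall. *)

From Stdlib Require Import Reals Lra Psatz.
From Coquelicot Require Import Coquelicot.
Open Scope R_scope.

Lemma exp_opp_mul_exp (y : R) : exp (- y) * exp y = 1.
Proof. rewrite <- exp_plus, Rplus_opp_l. exact exp_0. Qed.

Lemma exp_le_exp_of_le (x y : R) : x <= y -> exp x <= exp y.
Proof. intros [Hlt | ->]; [left; apply exp_increasing, Hlt | right; reflexivity]. Qed.

(* The exponent is below [1/4] because [2 y < e^{2y}], and [1/4 < ln 2]. *)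
Lemma exp_half_mul_exp_opp_double_lt_2 (y : R) : 0 < y -> exp (y / 2 * exp (- (2 * y))) < 2.
Proof.
  intros Hy. apply Rlt_le_trans with (exp (ln 2)); [| rewrite exp_ln; lra].
  apply exp_increasing.
  assert (1 + 2 * y < exp (2 * y)) by (apply exp_ineq1; lra).
  pose proof (exp_opp_mul_exp (2 * y)). pose proof (exp_pos (- (2 * y))). pose proof ln_lt_2.
  nra.
Qed.

Lemma cosh_sinh_comb (K c y : R) :
  K * cosh y + c * sinh y = ((K + c) * exp y + (K - c) * exp (- y)) / 2.
Proof. unfold cosh, sinh. field. Qed.

Section Multipliers.
Variables M l : R.
Hypothesis M_pos : 0 < M.
Hypothesis l_pos : 0 < l.

Let L := lam M l.
Let K := kap M l.
Let m := M / 2.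

Lemma lam_ge0 : 0 <= L.
Proof.
  apply Rmult_le_pos; [|apply sqrt_pos].
  apply Rmult_le_pos; [lra | left; apply exp_pos].
Qed.

Lemma lam_le : L <= m * exp (- (M * l)).
Proof.
  assert (Hml : 0 < M * l) by nra.
  assert (Hsqrt : sqrt (1 - 2 * M * l * exp (- (2 * M * l))) <= 1).
  { rewrite <- sqrt_1 at 2. apply sqrt_le_1_alt.
    pose proof (exp_pos (- (2 * M * l))). nra. }
  unfold L, lam, m. rewrite <- (Rmult_1_r (M / 2 * exp (- (M * l)))) at 2.
  apply Rmult_le_compat_l; [|exact Hsqrt].
  apply Rmult_le_pos; [lra | left; apply exp_pos].
Qed.

Lemma kap_sqr : K * K = L ^ 2 + m ^ 2.
Proof. apply sqrt_sqrt. nra. Qed.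

Lemma kap_ge_half : m <= K.
Proof.
  pose proof kap_sqr. pose proof lam_ge0.
  assert (0 <= K) by apply sqrt_pos. assert (0 < m) by (unfold m; lra).
  nra.
Qed.

Lemma kap_ge_lam : L <= K.
Proof. pose proof kap_sqr. pose proof lam_ge0. assert (0 <= K) by apply sqrt_pos. nra. Qed.

Lemma kap_pos : 0 < K.
Proof. pose proof kap_ge_half. unfold m in *. lra. Qed.

Lemma kap_le : K <= m * (1 + exp (- (2 * M * l)) / 2).
Proof.
  pose proof (exp_pos (- (2 * M * l))) as Hq.
  assert (Hq1 : exp (- (2 * M * l)) <= 1).
  { rewrite <- exp_0. apply exp_le_exp_of_le. nra. }
  assert (HL : L ^ 2 <= m ^ 2 * exp (- (2 * M * l))).
  { pose proof lam_le. pose proof lam_ge0. pose proof (exp_pos (- (M * l))).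
    replace (exp (- (2 * M * l))) with (exp (- (M * l)) * exp (- (M * l)))
      by (rewrite <- exp_plus; f_equal; ring).
    nra. }
  assert (Hm : 0 < m) by (unfold m; lra).
  apply Rsqr_incr_0_var; [|nra].
  unfold Rsqr. rewrite kap_sqr. nra.
Qed.

(* The estimate that makes [g2f] positive on [[0, l]]: this is where the choice of [lam] enters. *)
Lemma lam_mul_exp_lt (x : R) : x <= l -> L * exp (2 * K * x) < M.
Proof.
  intros Hx.
  pose proof kap_pos. pose proof lam_ge0. pose proof kap_le.
  pose proof (exp_half_mul_exp_opp_double_lt_2 (M * l) ltac:(nra)) as Hsmall.
  set (E := exp (M * l / 2 * exp (- (2 * (M * l))))) in *.
  assert (Hexp : exp (2 * K * x) <= exp (M * l) * E).
  { unfold E. rewrite <- exp_plus. apply exp_le_exp_of_le.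
    replace (2 * (M * l)) with (2 * M * l) by ring.
    pose proof (exp_pos (- (2 * M * l))). unfold m in *. nra. }
  assert (Hprod : L * exp (2 * K * x) <= m * exp (- (M * l)) * (exp (M * l) * E)).
  { apply Rmult_le_compat; [lra | left; apply exp_pos | apply lam_le | exact Hexp]. }
  replace (m * exp (- (M * l)) * (exp (M * l) * E))
    with (m * E * (exp (- (M * l)) * exp (M * l))) in Hprod by ring.
  rewrite exp_opp_mul_exp in Hprod.
  assert (m * E * 1 < M) by (unfold m; nra).
  lra.
Qed.

Lemma g1f_exp (x : R) : g1f M l x =
  exp (M * x / 2) / K * (((K + L - m) * exp (K * x) + (K - L + m) * exp (- (K * x))) / 2).
Proof. unfold g1f. fold K L m. rewrite cosh_sinh_comb. do 3 f_equal; ring. Qed.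

Lemma g2f_exp (x : R) : g2f M l x =
  exp (M * x / 2) / K * (((K - L - m) * exp (K * x) + (K + L + m) * exp (- (K * x))) / 2).
Proof.
  unfold g2f. fold K L m. unfold Rminus at 1. rewrite Ropp_mult_distr_l, cosh_sinh_comb.
  do 3 f_equal; ring.
Qed.

Lemma g1f_pos (x : R) : 0 < g1f M l x.
Proof.
  rewrite g1f_exp.
  pose proof kap_pos. pose proof kap_ge_half. pose proof kap_ge_lam. pose proof lam_ge0.
  pose proof (exp_pos (M * x / 2)). pose proof (exp_pos (K * x)). pose proof (exp_pos (- (K * x))).
  assert (0 < m) by (unfold m; lra).
  apply Rmult_lt_0_compat; [apply Rdiv_lt_0_compat; lra | nra].
Qed.

Lemma g2f_pos (x : R) : x <= l -> 0 < g2f M l x.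
Proof.
  intros Hx. rewrite g2f_exp.
  pose proof kap_pos. pose proof kap_ge_half. pose proof lam_ge0.
  pose proof (exp_pos (M * x / 2)).
  pose proof (exp_pos (K * x)) as Hp. pose proof (exp_pos (- (K * x))) as Hn.
  assert (Hm : 0 < m) by (unfold m; lra).
  assert (Hfactor : (K - L - m) * (K + L + m) = - (2 * L * m)) by (pose proof kap_sqr; nra).
  assert (Hsq : exp (K * x) * exp (K * x) = exp (2 * K * x))
    by (rewrite <- exp_plus; f_equal; ring).
  assert (Hone : exp (K * x) * exp (- (K * x)) = 1)
    by (rewrite Rmult_comm; apply exp_opp_mul_exp).
  pose proof (lam_mul_exp_lt x Hx) as Hlt.
  assert (Hbody : 0 < ((K - L - m) * exp (K * x) + (K + L + m) * exp (- (K * x)))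
                      * (exp (K * x) * (K + L + m))).
  { replace (((K - L - m) * exp (K * x) + (K + L + m) * exp (- (K * x)))
              * (exp (K * x) * (K + L + m)))
      with ((K - L - m) * (K + L + m) * (exp (K * x) * exp (K * x))
            + (K + L + m) ^ 2 * (exp (K * x) * exp (- (K * x)))) by ring.
    rewrite Hfactor, Hsq, Hone. unfold m in *. nra. }
  apply Rmult_lt_0_compat; [apply Rdiv_lt_0_compat; lra |].
  apply Rdiv_lt_0_compat; [|lra].
  apply (Rmult_lt_reg_r (exp (K * x) * (K + L + m))); [nra | lra].
Qed.

Lemma g1f_0 : g1f M l 0 = 1.
Proof.
  unfold g1f. fold K L. pose proof kap_pos.
  rewrite Rmult_0_r, Rmult_0_r, cosh_0, sinh_0, Rdiv_0_l, exp_0. field. lra.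
Qed.

Lemma g2f_0 : g2f M l 0 = 1.
Proof.
  unfold g2f. fold K L. pose proof kap_pos.
  rewrite Rmult_0_r, Rmult_0_r, cosh_0, sinh_0, Rdiv_0_l, exp_0. field. lra.
Qed.

Lemma g1f_sub_g2f (x : R) : g1f M l x - g2f M l x = exp (M * x / 2) / K * (2 * L * sinh (K * x)).
Proof. unfold g1f, g2f. fold K L. pose proof kap_pos. field. lra. Qed.

Lemma g2f_le_g1f (x : R) : 0 <= x -> g2f M l x <= g1f M l x.
Proof.
  intros Hx. apply Rminus_le_0. rewrite g1f_sub_g2f.
  pose proof kap_pos. pose proof lam_ge0. pose proof (exp_pos (M * x / 2)).
  assert (0 <= sinh (K * x)).
  { rewrite <- sinh_0. destruct (Req_dec x 0) as [-> | ne]; [rewrite Rmult_0_r; lra |].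
    left. apply sinh_lt. nra. }
  apply Rmult_le_pos; [apply Rlt_le, Rdiv_lt_0_compat; lra | nra].
Qed.

(* Both derivative identities reduce to [K^2 = L^2 + m^2]. *)
Lemma is_derive_g1f (x : R) :
  is_derive (g1f M l) x (L * g1f M l x + m * (g1f M l x - g2f M l x)).
Proof.
  pose proof kap_pos.
  unfold g1f, g2f, cosh, sinh. fold K L m. auto_derive; [lra|].
  change (M * x * / 2) with (M * x / 2).
  apply Rminus_diag_uniq.
  match goal with |- ?D - ?T = 0 =>
    replace (D - T) with ((K * K - (L ^ 2 + m ^ 2)) *
      (exp (M * x / 2) * ((exp (K * x) - exp (- (K * x))) / 2) / K)) by (unfold m; field; lra) end.
  rewrite kap_sqr. ring.
Qed.

Lemma is_derive_g2f (x : R) :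
  is_derive (g2f M l) x (- L * g2f M l x - m * (g1f M l x - g2f M l x)).
Proof.
  pose proof kap_pos.
  unfold g1f, g2f, cosh, sinh. fold K L m. auto_derive; [lra|].
  change (M * x * / 2) with (M * x / 2).
  apply Rminus_diag_uniq.
  match goal with |- ?D - ?T = 0 =>
    replace (D - T) with ((K * K - (L ^ 2 + m ^ 2)) *
      (exp (M * x / 2) * ((exp (K * x) - exp (- (K * x))) / 2) / K)) by (unfold m; field; lra) end.
  rewrite kap_sqr. ring.
Qed.

End Multipliers.

Lemma continuity_2d_pt_swap (f : R -> R -> R) (x t : R) :
  continuity_2d_pt f x t -> continuity_2d_pt (fun a b => f b a) t x.
Proof.
  intros H eps. destruct (H eps) as [d Hd]. exists d. intros a b Ha Hb. apply Hd; auto.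
Qed.

Lemma continuity_2d_pt_continuous_fst (f : R -> R -> R) (x t : R) :
  continuity_2d_pt f x t -> continuous (fun y => f y t) x.
Proof.
  intros H. apply continuity_2d_pt_filterlim in H.
  apply (continuous_comp_2 (fun y : R => y) (fun _ : R => t) f x).
  - apply continuous_id.
  - apply continuous_const.
  - exact H.
Qed.

Lemma continuity_2d_pt_pow2 (f : R -> R -> R) (x t : R) :
  continuity_2d_pt f x t -> continuity_2d_pt (fun a b => f a b ^ 2) x t.
Proof.
  intros H. apply continuity_2d_pt_ext with (fun a b => f a b * f a b).
  - intros; ring.
  - apply continuity_2d_pt_mult; auto.
Qed.

Lemma continuity_2d_pt_of_ex_derive (f : R -> R) (x t : R) :
  (forall y, ex_derive f y) -> continuity_2d_pt (fun a _ => f a) x t.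
Proof.
  intros H. apply continuity_1d_2d_pt_comp with (g := fun a _ => a).
  - apply continuity_pt_filterlim, (@ex_derive_continuous R_AbsRing R_NormedModule), H.
  - apply continuity_2d_pt_id1.
Qed.

Lemma ex_RInt_of_continuity_2d_pt (f : R -> R -> R) (a b t : R) :
  (forall x, continuity_2d_pt f x t) -> ex_RInt (fun x => f x t) a b.
Proof.
  intros H. apply (@ex_RInt_continuous R_CompleteNormedModule).
  intros z _. apply continuity_2d_pt_continuous_fst, H.
Qed.

(* Gronwall's inequality for [E' <= - lam E], via the monotonicity of [E(s) e^{lam (s - t0)}]. *)
Lemma le_exp_decay_of_derive (E E' : R -> R) (lam t0 t : R) :
  (forall s, t0 <= s <= t -> is_derive E s (E' s)) ->
  (forall s, t0 < s < t -> E' s <= - lam * E s) ->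
  t0 < t -> E t <= E t0 * exp (- (lam * (t - t0))).
Proof.
  intros HE Hle Ht.
  set (h := fun s => E s * exp (lam * (s - t0))).
  set (h' := fun s => (E' s + lam * E s) * exp (lam * (s - t0))).
  destruct (MVT_cor2 h h' t0 t Ht) as [c [Hmvt Hc]].
  { intros c Hc. apply is_derive_Reals. unfold h, h'.
    apply (is_derive_ext (fun s => mult (E s) (exp (lam * (s - t0))))); [reflexivity |].
    replace ((E' c + lam * E c) * exp (lam * (c - t0)))
      with (plus (mult (E' c) (exp (lam * (c - t0)))) (mult (E c) (lam * exp (lam * (c - t0)))))
      by (unfold plus, mult; cbn; ring).
    apply (is_derive_mult (K := R_AbsRing) E (fun s => exp (lam * (s - t0))));
      [apply HE, Hc | | intros; apply Rmult_comm].
    auto_derive; [exact I | rewrite Rmult_1_r; reflexivity]. }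
  assert (Hh' : h' c <= 0).
  { unfold h'. pose proof (Hle c Hc). pose proof (exp_pos (lam * (c - t0))). nra. }
  assert (Hh : h t <= h t0) by nra.
  unfold h in Hh. rewrite Rminus_diag, Rmult_0_r, exp_0, Rmult_1_r in Hh.
  pose proof (exp_pos (- (lam * (t - t0)))).
  replace (E t) with (E t * exp (lam * (t - t0)) * exp (- (lam * (t - t0)))).
  - apply Rmult_le_compat_r; lra.
  - rewrite Rmult_assoc, <- exp_plus, Rplus_opp_r, exp_0. ring.
Qed.

Lemma eq_0_of_not_in_supp (phi : R -> R) (s : R) : ~ in_supp phi s -> phi s = 0.
Proof.
  intros Hs. destruct (Req_dec (phi s) 0) as [e | ne]; [exact e |].
  exfalso. apply Hs. intros eps Heps. exists s.
  rewrite Rminus_diag, Rabs_R0. auto.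
Qed.

Section EnergyDecay.
Variables (A : R -> R) (Ainf l M lam0 : R) (g1 g2 : R -> R) (phi : R -> R) (u : R -> R -> R).
Hypothesis A_pos : forall x, 0 < A x.
Hypothesis A_ex_derive : forall x, ex_derive A x.
Hypothesis A'_ex_derive : forall x, ex_derive (Derive A) x.
Hypothesis A_const : forall x, l <= x -> A x = Ainf.
Hypothesis A_log_derive_bound : forall x, Rabs (Derive A x / A x) <= M.
Hypothesis l_pos : 0 < l.
Hypothesis u_sol : solves A phi u.
Hypothesis is_derive_g1 : forall x, is_derive g1 x (lam0 * g1 x + M / 2 * (g1 x - g2 x)).
Hypothesis is_derive_g2 : forall x, is_derive g2 x (- lam0 * g2 x - M / 2 * (g1 x - g2 x)).
Hypothesis g2_le_g1 : forall x, 0 <= x <= l -> g2 x <= g1 x.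
Hypothesis g2_l_ge0 : 0 <= g2 l.
Hypothesis g1_0 : g1 0 = 1.
Hypothesis g2_0 : g2 0 = 1.

Lemma Derive_A_eq_0 (x : R) : l < x -> Derive A x = 0.
Proof.
  intros Hx. rewrite (Derive_ext_loc A (fun _ => Ainf)); [apply Derive_const |].
  apply (filter_imp (fun y => l < y)); [intros y Hy; apply A_const; lra |].
  exact (open_gt l x Hx).
Qed.

Lemma ex_derive_g1 (x : R) : ex_derive g1 x.
Proof. eexists; apply is_derive_g1. Qed.

Lemma ex_derive_g2 (x : R) : ex_derive g2 x.
Proof. eexists; apply is_derive_g2. Qed.

Lemma ex_derive_x_pd (L : list bool) (x t : R) : ex_derive (fun y => iter_pd L u y t) x.
Proof. exact (proj1 (proj1 u_sol L x t)). Qed.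

Lemma ex_derive_t_pd (L : list bool) (x t : R) : ex_derive (fun s => iter_pd L u x s) t.
Proof. exact (proj1 (proj2 (proj1 u_sol L x t))). Qed.

Lemma continuity_2d_pt_pd (L : list bool) (x t : R) : continuity_2d_pt (iter_pd L u) x t.
Proof. apply continuity_2d_pt_filterlim. exact (proj2 (proj2 (proj1 u_sol L x t))). Qed.

Lemma ex_derive_x_Dt (x t : R) : ex_derive (fun y => Dt u y t) x.
Proof. exact (ex_derive_x_pd (false :: nil) x t). Qed.
Lemma ex_derive_t_Dt (x t : R) : ex_derive (fun s => Dt u x s) t.
Proof. exact (ex_derive_t_pd (false :: nil) x t). Qed.
Lemma ex_derive_x_Dx (x t : R) : ex_derive (fun y => Dx u y t) x.
Proof. exact (ex_derive_x_pd (true :: nil) x t). Qed.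
Lemma ex_derive_t_Dx (x t : R) : ex_derive (fun s => Dx u x s) t.
Proof. exact (ex_derive_t_pd (true :: nil) x t). Qed.

Lemma Dx_Dt (x t : R) : Dx (Dt u) x t = Dt (Dx u) x t.
Proof.
  apply (Schwarz u x t).
  - exists (mkposreal 1 Rlt_0_1). intros a b _ _.
    split; [exact (ex_derive_x_pd nil a b) |].
    split; [exact (ex_derive_t_pd nil a b) |].
    split; [apply ex_derive_x_Dt | apply ex_derive_t_Dx].
  - exact (continuity_2d_pt_pd (true :: false :: nil) x t).
  - exact (continuity_2d_pt_pd (false :: true :: nil) x t).
Qed.

Lemma wave_eq (x t : R) : 0 < x ->
  Dt (Dt u) x t = Dx (Dx u) x t + Derive A x / A x * Dx u x t.
Proof.
  intros Hx. pose proof (proj1 (proj2 u_sol) x t Hx) as H. unfold box_A in H.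
  rewrite Derive_mult in H by (apply A_ex_derive || apply ex_derive_x_Dx).
  pose proof (A_pos x).
  change (Derive (fun y => Dx u y t) x) with (Dx (Dx u) x t) in H.
  apply Rminus_diag_uniq in H. rewrite H. field. lra.
Qed.

Definition wplus (x t : R) : R := Dt u x t + Dx u x t.
Definition wminus (x t : R) : R := Dt u x t - Dx u x t.

Definition dens (x t : R) : R := (g1 x * wplus x t ^ 2 + g2 x * wminus x t ^ 2) * A x.
Definition dens_rate (x t : R) : R :=
  (g1 x * wplus x t * (Dt (Dt u) x t + Dt (Dx u) x t)
   + g2 x * wminus x t * (Dt (Dt u) x t - Dt (Dx u) x t)) * A x.
Definition flux (x t : R) : R := A x * (g1 x * wplus x t ^ 2 - g2 x * wminus x t ^ 2) / 2.
Definition flux_dx (x t : R) : R :=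
  (Derive A x * (g1 x * wplus x t ^ 2 - g2 x * wminus x t ^ 2)
   + A x * ((lam0 * g1 x + M / 2 * (g1 x - g2 x)) * wplus x t ^ 2
            + g1 x * (2 * wplus x t * (Dx (Dt u) x t + Dx (Dx u) x t))
            - ((- lam0 * g2 x - M / 2 * (g1 x - g2 x)) * wminus x t ^ 2
               + g2 x * (2 * wminus x t * (Dx (Dt u) x t - Dx (Dx u) x t))))) / 2.

Ltac solve_ex_derive :=
  repeat match goal with
  | |- _ /\ _ => split
  | |- True => exact I
  | |- ex_derive (fun _ => A _) _ => apply A_ex_derive
  | |- ex_derive (fun _ => g1 _) _ => apply ex_derive_g1
  | |- ex_derive (fun _ => g2 _) _ => apply ex_derive_g2
  | |- ex_derive (fun y => Dt u y _) _ => apply ex_derive_x_Dt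
  | |- ex_derive (fun y => Dx u y _) _ => apply ex_derive_x_Dx
  | |- ex_derive (fun s => Dt u _ s) _ => apply ex_derive_t_Dt
  | |- ex_derive (fun s => Dx u _ s) _ => apply ex_derive_t_Dx
  end.

Lemma is_derive_dens (x t : R) : is_derive (fun s => dens x s) t (2 * dens_rate x t).
Proof.
  unfold dens, dens_rate, wplus, wminus. auto_derive.
  - solve_ex_derive.
  - change (Derive (fun s => Dt u x s) t) with (Dt (Dt u) x t).
    change (Derive (fun s => Dx u x s) t) with (Dt (Dx u) x t). ring.
Qed.

Lemma is_derive_flux (x t : R) : is_derive (fun y => flux y t) x (flux_dx x t).
Proof.
  unfold flux, flux_dx, wplus, wminus. auto_derive.
  - solve_ex_derive.
  - change (Derive (fun y => g1 y) x) with (Derive g1 x).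
    change (Derive (fun y => g2 y) x) with (Derive g2 x).
    change (Derive (fun y => A y) x) with (Derive A x).
    rewrite (is_derive_unique _ _ _ (is_derive_g1 x)), (is_derive_unique _ _ _ (is_derive_g2 x)).
    change (Derive (fun y => Dt u y t) x) with (Dx (Dt u) x t).
    change (Derive (fun y => Dx u y t) x) with (Dx (Dx u) x t). field.
Qed.

Ltac solve_continuity_2d :=
  repeat match goal with
  | |- continuity_2d_pt (fun a b => @?f a b + @?g a b) _ _ => apply (continuity_2d_pt_plus f g)
  | |- continuity_2d_pt (fun a b => @?f a b - @?g a b) _ _ => apply (continuity_2d_pt_minus f g)
  | |- continuity_2d_pt (fun a b => @?f a b * @?g a b) _ _ => apply (continuity_2d_pt_mult f g)
  | |- continuity_2d_pt (fun a b => - @?f a b) _ _ => apply (continuity_2d_pt_opp f)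
  | |- continuity_2d_pt (fun a b => @?f a b / 2) _ _ =>
      apply (continuity_2d_pt_ext (fun a b => f a b * / 2)); [intros; reflexivity |]
  | |- continuity_2d_pt (fun a b => @?f a b ^ 2) _ _ => apply (continuity_2d_pt_pow2 f)
  | |- continuity_2d_pt (fun a b => Dt u a b) _ _ => exact (continuity_2d_pt_pd (false :: nil) _ _)
  | |- continuity_2d_pt (fun a b => Dx u a b) _ _ => exact (continuity_2d_pt_pd (true :: nil) _ _)
  | |- continuity_2d_pt (fun a b => Dt (Dt u) a b) _ _ =>
      exact (continuity_2d_pt_pd (false :: false :: nil) _ _)
  | |- continuity_2d_pt (fun a b => Dx (Dt u) a b) _ _ =>
      exact (continuity_2d_pt_pd (true :: false :: nil) _ _)
  | |- continuity_2d_pt (fun a b => Dt (Dx u) a b) _ _ =>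
      exact (continuity_2d_pt_pd (false :: true :: nil) _ _)
  | |- continuity_2d_pt (fun a b => Dx (Dx u) a b) _ _ =>
      exact (continuity_2d_pt_pd (true :: true :: nil) _ _)
  | |- continuity_2d_pt (fun a b => g1 a) _ _ => apply continuity_2d_pt_of_ex_derive, ex_derive_g1
  | |- continuity_2d_pt (fun a b => g2 a) _ _ => apply continuity_2d_pt_of_ex_derive, ex_derive_g2
  | |- continuity_2d_pt (fun a b => A a) _ _ => apply continuity_2d_pt_of_ex_derive, A_ex_derive
  | |- continuity_2d_pt (fun a b => Derive A a) _ _ =>
      apply continuity_2d_pt_of_ex_derive, A'_ex_derive
  | |- continuity_2d_pt (fun a b => ?c) _ _ => apply continuity_2d_pt_const
  end.

Lemma continuity_2d_pt_dens (x t : R) : continuity_2d_pt dens x t.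
Proof. unfold dens, wplus, wminus. solve_continuity_2d. Qed.
Lemma continuity_2d_pt_dens_rate (x t : R) : continuity_2d_pt dens_rate x t.
Proof. unfold dens_rate, wplus, wminus. solve_continuity_2d. Qed.
Lemma continuity_2d_pt_flux_dx (x t : R) : continuity_2d_pt flux_dx x t.
Proof. unfold flux_dx, wplus, wminus. solve_continuity_2d. Qed.
Lemma continuity_2d_pt_wplus (x t : R) : continuity_2d_pt wplus x t.
Proof. unfold wplus. solve_continuity_2d. Qed.

Lemma is_derive_energy (t : R) :
  is_derive (fun s => energy A u g1 g2 l s) t (RInt (fun x => dens_rate x t) 0 l).
Proof.
  change (fun s => energy A u g1 g2 l s) with (fun s => / 2 * RInt (fun x => dens x s) 0 l).
  assert (HR : RInt (fun x => Derive (fun s => dens x s) t) 0 l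
               = 2 * RInt (fun x => dens_rate x t) 0 l).
  { rewrite (RInt_ext _ (fun x => 2 * dens_rate x t)).
    - apply (RInt_scal (V := R_CompleteNormedModule)).
      apply ex_RInt_of_continuity_2d_pt; intros; apply continuity_2d_pt_dens_rate.
    - intros x _. apply is_derive_unique, is_derive_dens. }
  replace (RInt (fun x => dens_rate x t) 0 l)
    with (/ 2 * RInt (fun x => Derive (fun s => dens x s) t) 0 l) by (rewrite HR; field).
  apply is_derive_scal, (is_derive_RInt_param (fun s x => dens x s)).
  - apply filter_forall. intros s x _. eexists. apply is_derive_dens.
  - intros x _. apply continuity_2d_pt_ext with (fun t' x' => 2 * dens_rate x' t').
    + intros t' x'. symmetry. apply is_derive_unique, is_derive_dens.
    + apply (continuity_2d_pt_swap (fun x' t' => 2 * dens_rate x' t')).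
      apply continuity_2d_pt_mult; [apply continuity_2d_pt_const | apply continuity_2d_pt_dens_rate].
  - apply filter_forall. intros s. apply ex_RInt_of_continuity_2d_pt; intros; apply continuity_2d_pt_dens.
Qed.

Lemma dens_rate_le (x t : R) : 0 < x < l ->
  dens_rate x t <= flux_dx x t - lam0 / 2 * dens x t.
Proof.
  intros Hx.
  pose proof (A_pos x) as HAx.
  assert (Hg : 0 <= g1 x - g2 x) by (pose proof (g2_le_g1 x ltac:(lra)); lra).
  assert (Ha : - M <= Derive A x / A x <= M) by apply Rabs_le_between, A_log_derive_bound.
  unfold dens_rate, flux_dx, dens, wplus, wminus. rewrite Dx_Dt, wave_eq by lra.
  set (a := Derive A x / A x) in *.
  replace (Derive A x) with (a * A x) by (unfold a; field; lra).
  apply Rminus_le_0.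
  match goal with |- 0 <= ?R - ?L =>
    replace (R - L) with (A x * (g1 x - g2 x)
      * ((M + a) * Dt u x t ^ 2 + (M - a) * Dx u x t ^ 2) / 2) by (unfold a; field; lra) end.
  assert (0 <= (M + a) * Dt u x t ^ 2) by (apply Rmult_le_pos; [lra | apply pow2_ge_0]).
  assert (0 <= (M - a) * Dx u x t ^ 2) by (apply Rmult_le_pos; [lra | apply pow2_ge_0]).
  assert (0 <= A x * (g1 x - g2 x)) by (apply Rmult_le_pos; lra).
  apply Rmult_le_pos; [apply Rmult_le_pos; lra | lra].
Qed.

Lemma wplus_eq_0 (x s : R) : 0 < x -> s < 0 -> wplus x s = 0.
Proof.
  intros Hx Hs. pose proof (proj2 (proj2 (proj2 u_sol))) as Hzero. unfold wplus, Dt, Dx.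
  rewrite (Derive_ext_loc (fun s' => u x s') (fun _ => 0)).
  rewrite (Derive_ext_loc (fun y => u y s) (fun _ => 0)).
  - rewrite !Derive_const. ring.
  - apply (filter_imp (fun y => 0 < y)); [intros; apply Hzero; auto | exact (open_gt 0 x Hx)].
  - apply (filter_imp (fun s' => s' < 0)); [intros; apply Hzero; auto | exact (open_lt 0 s Hs)].
Qed.

Lemma is_derive_wplus_x (x t : R) :
  is_derive (fun y => wplus y t) x (Dx (Dt u) x t + Dx (Dx u) x t).
Proof. unfold wplus. auto_derive; [solve_ex_derive | rewrite !Rmult_1_l; reflexivity]. Qed.

Lemma is_derive_wplus_t (x t : R) :
  is_derive (fun s => wplus x s) t (Dt (Dt u) x t + Dt (Dx u) x t).
Proof. unfold wplus. auto_derive; [solve_ex_derive | rewrite !Rmult_1_l; reflexivity]. Qed.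

Lemma is_derive_wplus_characteristic (x t r : R) : l < x + r ->
  is_derive (fun r => wplus (x + r) (t - r)) r 0.
Proof.
  intros Hr.
  assert (Hdiff : filterdiff (fun p : R * R => wplus (fst p) (snd p)) (locally (x + r, t - r))
     (fun p : R * R => plus (scal (fst p) (Dx (Dt u) (x + r) (t - r) + Dx (Dx u) (x + r) (t - r)))
                            (scal (snd p) (Dt (Dt u) (x + r) (t - r) + Dt (Dx u) (x + r) (t - r))))).
  { apply (is_derive_filterdiff wplus (x + r) (t - r) (fun a b => Dx (Dt u) a b + Dx (Dx u) a b)).
    - apply filter_forall. intros p. apply is_derive_wplus_x.
    - apply is_derive_wplus_t.
    - apply (continuity_2d_pt_filterlim (fun a b => Dx (Dt u) a b + Dx (Dx u) a b)).
      solve_continuity_2d. }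
  apply filterdiff_differentiable_pt_lim in Hdiff.
  assert (Hx : derivable_pt_lim (fun r => x + r) r 1) by (apply is_derive_Reals; auto_derive; auto).
  assert (Ht : derivable_pt_lim (fun r => t - r) r (-1)) by (apply is_derive_Reals; auto_derive; auto).
  apply is_derive_Reals.
  replace 0 with ((Dx (Dt u) (x + r) (t - r) + Dx (Dx u) (x + r) (t - r)) * 1
                  + (Dt (Dt u) (x + r) (t - r) + Dt (Dx u) (x + r) (t - r)) * -1).
  - exact (derivable_pt_lim_comp_2d wplus (fun r => x + r) (fun r => t - r) r _ _ _ _ Hdiff Hx Ht).
  - rewrite wave_eq, Derive_A_eq_0, Dx_Dt by lra. unfold Rdiv. ring.
Qed.

(* Beyond [l] the coefficient [A] is constant, so [Dt u + Dx u] is transported along the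
   characteristics [x + t = const], which all come from the region [t < 0] where [u] vanishes. *)
Lemma wplus_l (t : R) : wplus l t = 0.
Proof.
  set (psi := fun r => wplus (l + r) (t - r)).
  set (R0 := Rabs t + 1).
  assert (HR0 : 0 < R0) by (unfold R0; pose proof (Rabs_pos t); lra).
  destruct (MVT_gen psi 0 R0 (fun _ => 0)) as [c [_ Hmvt]].
  - intros r Hr. rewrite Rmin_left in Hr by lra.
    apply is_derive_wplus_characteristic. lra.
  - intros r _. apply continuity_pt_filterlim.
    apply (continuous_comp_2 (fun r => l + r) (fun r => t - r) wplus).
    + apply (@ex_derive_continuous R_AbsRing R_NormedModule). auto_derive; auto.
    + apply (@ex_derive_continuous R_AbsRing R_NormedModule). auto_derive; auto.
    + apply continuity_2d_pt_filterlim, continuity_2d_pt_wplus.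
  - unfold psi in Hmvt. rewrite Rplus_0_r, Rminus_0_r in Hmvt.
    rewrite (wplus_eq_0 (l + R0) (t - R0)) in Hmvt; [lra | lra |].
    unfold R0. pose proof (Rle_abs t). lra.
Qed.

Lemma flux_0 (t : R) : phi t = 0 -> flux 0 t = 0.
Proof.
  intros Hphi. unfold flux, wplus, wminus.
  rewrite (proj1 (proj2 (proj2 u_sol)) t), Hphi, g1_0, g2_0, Rplus_0_r, Rminus_0_r.
  field.
Qed.

Lemma flux_l_le0 (t : R) : flux l t <= 0.
Proof.
  unfold flux. rewrite wplus_l. pose proof (A_pos l).
  assert (0 <= A l * (g2 l * wminus l t ^ 2)).
  { apply Rmult_le_pos; [lra | apply Rmult_le_pos; [exact g2_l_ge0 | apply pow2_ge_0]]. }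
  lra.
Qed.

Lemma energy_rate_le (t : R) : phi t = 0 ->
  RInt (fun x => dens_rate x t) 0 l <= - lam0 * energy A u g1 g2 l t.
Proof.
  intros Hphi.
  change (energy A u g1 g2 l t) with (/ 2 * RInt (fun x => dens x t) 0 l).
  assert (Hdens : ex_RInt (fun x => dens x t) 0 l)
    by (apply ex_RInt_of_continuity_2d_pt; intros; apply continuity_2d_pt_dens).
  assert (Hflux : is_RInt (fun x => flux_dx x t) 0 l (minus (flux l t) (flux 0 t))).
  { apply (is_RInt_derive (fun y => flux y t)).
    - intros x _. apply is_derive_flux.
    - intros x _. apply continuity_2d_pt_continuous_fst, continuity_2d_pt_flux_dx. }
  assert (Hbound : is_RInt (fun x => flux_dx x t - lam0 / 2 * dens x t) 0 l
                     ((flux l t - flux 0 t) - lam0 / 2 * RInt (fun x => dens x t) 0 l)).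
  { apply (is_RInt_minus (V := R_NormedModule)); [exact Hflux |].
    apply (is_RInt_scal (V := R_NormedModule)), (RInt_correct (V := R_CompleteNormedModule)), Hdens. }
  assert (Hle : RInt (fun x => dens_rate x t) 0 l
                <= RInt (fun x => flux_dx x t - lam0 / 2 * dens x t) 0 l).
  { apply RInt_le; [lra | | eexists; exact Hbound |].
    - apply ex_RInt_of_continuity_2d_pt; intros; apply continuity_2d_pt_dens_rate.
    - intros x Hx. apply dens_rate_le, Hx. }
  rewrite (is_RInt_unique _ _ _ _ Hbound), flux_0 in Hle by exact Hphi.
  pose proof (flux_l_le0 t). lra.
Qed.

Lemma energy_decay (tau0 tau : R) : (forall s, tau0 < s -> phi s = 0) -> tau0 < tau ->
  energy A u g1 g2 l tau <= energy A u g1 g2 l tau0 * exp (- (lam0 * (tau - tau0))).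
Proof.
  intros Hphi Htau.
  apply (le_exp_decay_of_derive _ (fun s => RInt (fun x => dens_rate x s) 0 l)); [| | exact Htau].
  - intros s _. apply is_derive_energy.
  - intros s Hs. apply energy_rate_le, Hphi, Hs.
Qed.

End EnergyDecay.

Theorem mainTheorem11 (A : R -> R) (Ainf l M : R) :
  admissible A Ainf ->
  0 < l ->
  (forall x, l <= x -> A x = Ainf) ->
  (forall x, Rabs (Derive A x / A x) <= M) ->
  (exists x0, Rabs (Derive A x0 / A x0) = M) ->
  0 < M ->
  (forall x, 0 <= x <= l -> 0 < g1f M l x /\ 0 < g2f M l x) /\
  g1f M l 0 = 1 /\ g2f M l 0 = 1 /\
  (forall x, 0 <= x <= l ->
     Derive (g1f M l) x - M / 2 * Rabs (g1f M l x - g2f M l x)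
       >= lam M l * g1f M l x /\
     - Derive (g2f M l) x - M / 2 * Rabs (g1f M l x - g2f M l x)
       >= lam M l * g2f M l x) /\
  (forall (phi : R -> R) (u : R -> R -> R) (tau0 : R),
     test_fun_pos phi ->
     in_supp phi tau0 -> (forall t, in_supp phi t -> t <= tau0) ->
     solves A phi u ->
     forall tau, tau0 < tau ->
       energy A u (g1f M l) (g2f M l) l tau
         <= energy A u (g1f M l) (g2f M l) l tau0 * exp (- (lam M l * (tau - tau0)))).
Proof.
  intros [A_smooth [A_pos _]] Hl A_const A_bound _ HM.
  split; [| split; [| split; [| split]]].
  - intros x Hx. split; [apply g1f_pos | apply g2f_pos]; lra.
  - apply g1f_0; lra.
  - apply g2f_0; lra.
  - intros x Hx.
    rewrite (is_derive_unique _ _ _ (is_derive_g1f M l HM x)),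
            (is_derive_unique _ _ _ (is_derive_g2f M l HM x)).
    pose proof (g2f_le_g1f M l HM x (proj1 Hx)).
    rewrite Rabs_right by lra. lra.
  - intros phi u tau0 _ _ Hmax Hsol tau Htau.
    apply (energy_decay A Ainf l M _ _ _ phi u); auto.
    + intros x. exact (A_smooth 0%nat x).
    + intros x. exact (A_smooth 1%nat x).
    + apply is_derive_g1f; lra.
    + apply is_derive_g2f; lra.
    + intros x Hx. apply g2f_le_g1f; lra.
    + left. apply g2f_pos; lra.
    + apply g1f_0; lra.
    + apply g2f_0; lra.
    + intros s Hs. apply eq_0_of_not_in_supp. intros Hsupp. pose proof (Hmax s Hsupp). lra.
Qed.
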